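(* Let $q\ge1$ be an integer. Suppose there are pairwise disjoint Borel sets $K_0,K_1,K_2$ with $K_0\cup K_1\cup K_2=[0,1)$ and constants $\varepsilon,\delta>0$ such that: (i) for each $x\in K_0$, $e(q,x;\varepsilon,\delta)=1$; (ii) for each $x\in K_1$ there exist $\mathbf{a}_x,\mathbf{b}_x\in\mathcal{A}^q$ with $x(\mathbf{a}_x),x(\mathbf{b}_x)\in K_0$ such that $(\mathbf{a}_x,\mathbf{b}_x)$ and $(\mathbf{b}_x,\mathbf{a}_x)$ are the only possible pairs $(\mathbf{u},\mathbf{v})$ with $\mathbf{u}\ne\mathbf{v}$ in $E(q,x;\varepsilon,\delta)$; (iii) for each $x\in K_2$ there exist $\mathbf{a}_x,\mathbf{b}_x,\mathbf{c}_x\in\mathcal{A}^q$ with $x(\mathbf{a}_x),x(\mathbf{b}_x)\in K_0$ and $x(\mathbf{c}_x)\in K_1$ such that $(\mathbf{a}_x,\mathbf{b}_x),(\mathbf{a}_x,\mathbf{c}_x),(\mathbf{b}_x,\mathbf{a}_x),(\mathbf{c}_x,\mathbf{a}_x)$ are the only possible pairs $(\mathbf{u},\mathbf{v})$ with $\mathbf{u}\ne\mathbf{v}$ in $E(q,x;\varepsilon,\delta)$. Then $\sigma(q)\le t<1.61$, where $t>1$ is the unique solution of $\frac{1}{t^2-1}+\frac{2}{t^3-2}+1=t^2$.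
   Context: Standing setup: $b\ge2$ integer, $\mathcal{A}=\{0,\dots,b-1\}$, $\gamma\in(1/b,1)$, $\psi$ a $\mathbb{Z}$-periodic $C^1$ function. $S(x,\mathbf{i})=\sum_{n\ge1}\gamma^{n-1}\psi\big(\frac{x+i_1+i_2b+\cdots+i_nb^{n-1}}{b^n}\big)$, $S'=\partial_xS$. For $\mathbf{u}\in\mathcal{A}^q$, $x(\mathbf{u})=(x+u_1+u_2b+\cdots+u_qb^{q-1})/b^q$. Sequences $\mathbf{i},\mathbf{j}$ are $(\varepsilon,\delta)$-tangent at $x_0$ if $|S(x_0,\mathbf{i})-S(x_0,\mathbf{j})|\le\varepsilon$ and $|S'(x_0,\mathbf{i})-S'(x_0,\mathbf{j})|\le\delta$. $E(q,x_0;\varepsilon,\delta)$: pairs $(\mathbf{k},\mathbf{l})\in\mathcal{A}^q\times\mathcal{A}^q$ such that some concatenations $\mathbf{ku},\mathbf{lv}$ are $(\varepsilon,\delta)$-tangent at $x_0$; $e(q,x_0;\varepsilon,\delta)=\max_{\mathbf{k}}\#\{\mathbf{l}:(\mathbf{k},\mathbf{l})\in E(q,x_0;\varepsilon,\delta)\}$. Weight function: measurable $\omega:[0,1)\to(0,\infty)$ with $\omega,1/\omega$ bounded. Admissible testing function of order $q$: measurable $V:[0,1)\times\mathcal{A}^q\times\mathcal{A}^q\to[0,\infty)$ such that for some $\varepsilon,\delta>0$, $V(x,\mathbf{u},\mathbf{v})V(x,\mathbf{v},\mathbf{u})\ge1$ whenever $x\in[0,1)$ and $(\mathbf{u},\mathbf{v})\in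 E(q,x;\varepsilon,\delta)$. $\Sigma_{V,\omega}(x)=\sup_{\mathbf{u}}\frac{\omega(x)}{\omega(x(\mathbf{u}))}\sum_{\mathbf{v}}V(x,\mathbf{u},\mathbf{v})$; $\sigma(q)=\inf_{\omega,V}\|\Sigma_{V,\omega}\|_\infty$. *)

From Stdlib Require Import Reals Rtopology Lra List ClassicalEpsilon.
Open Scope R_scope.

(** Words over A = {0,...,b-1}: lists [u_1; ...; u_q] (u_k = nth (k-1) u 0).
    Infinite sequences i in A^N: functions nat -> nat, with i_k = i (k-1). *)

Definition is_word (b q : nat) (u : list nat) : Prop :=
  length u = q /\ Forall (fun d => (d < b)%nat) u.

Definition is_seq (b : nat) (i : nat -> nat) : Prop := forall n, (i n < b)%nat.

Fixpoint words (b q : nat) : list (list nat) :=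
  match q with
  | O => nil :: nil
  | S q' => flat_map (fun d => map (cons d) (words b q')) (seq 0 b)
  end.

(** i_1 + i_2 b + ... + i_m b^(m-1) *)
Definition digval (b : nat) (i : nat -> nat) (m : nat) : R :=
  sum_f_R0 (fun k => INR (i k) * INR b ^ k) m - INR (i m) * INR b ^ m.

(** x(u) = (x + u_1 + u_2 b + ... + u_q b^(q-1)) / b^q *)
Definition xw (b : nat) (x : R) (u : list nat) : R :=
  (x + digval b (fun k => nth k u 0%nat) (length u)) / INR b ^ (length u).

(** n-th term (n >= 1 written as n.+1) of S(x,i). *)
Definition Sterm (b : nat) (gam : R) (psi : R -> R) (x : R) (i : nat -> nat)
  (n : nat) : R :=
  gam ^ n * psi ((x + digval b i (S n)) / INR b ^ (S n)).

(** S(x,i) = sum_{n>=1} gam^(n-1) psi((x+i_1+...+i_n b^(n-1))/b^n) *)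
Definition Sfun (b : nat) (gam : R) (psi : R -> R) (x : R) (i : nat -> nat) : R :=
  epsilon (inhabits 0) (fun l => infinite_sum (Sterm b gam psi x i) l).

Definition Sder (b : nat) (gam : R) (psi : R -> R) (x : R) (i : nat -> nat) : R :=
  epsilon (inhabits 0)
    (fun l => derivable_pt_lim (fun y => Sfun b gam psi y i) x l).

Definition tangent (b : nat) (gam : R) (psi : R -> R) (eps del x0 : R)
  (i j : nat -> nat) : Prop :=
  Rabs (Sfun b gam psi x0 i - Sfun b gam psi x0 j) <= eps /\
  Rabs (Sder b gam psi x0 i - Sder b gam psi x0 j) <= del.

Definition concat (k : list nat) (u : nat -> nat) : nat -> nat :=
  fun n => if Nat.ltb n (length k) then nth n k 0%nat else u (n - length k)%nat.

Definition inE (b : nat) (gam : R) (psi : R -> R) (q : nat) (x0 eps del : R)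
  (k l : list nat) : Prop :=
  is_word b q k /\ is_word b q l /\
  exists u v, is_seq b u /\ is_seq b v /\
    tangent b gam psi eps del x0 (concat k u) (concat l v).

Definition inEb (b : nat) (gam : R) (psi : R -> R) (q : nat) (x0 eps del : R)
  (k l : list nat) : bool :=
  if excluded_middle_informative (inE b gam psi q x0 eps del k l)
  then true else false.

Definition e_num (b : nat) (gam : R) (psi : R -> R) (q : nat) (x0 eps del : R)
  : nat :=
  fold_right Nat.max 0%nat
    (map (fun k => length (filter (inEb b gam psi q x0 eps del k) (words b q)))
         (words b q)).

Inductive borel : (R -> Prop) -> Prop :=
| borel_open : forall A, open_set A -> borel A
| borel_compl : forall A, borel A -> borel (fun x => ~ A x)
| borel_union : forall A : nat -> R -> Prop,
    (forall n, borel (A n)) -> borel (fun x => exists n, A n x)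
| borel_ext : forall A B : R -> Prop,
    (forall x, A x <-> B x) -> borel A -> borel B.

Definition in01 (x : R) : Prop := 0 <= x < 1.

Definition measurable01 (f : R -> R) : Prop :=
  forall B, borel B -> borel (fun x => in01 x /\ B (f x)).

Definition null_set (N : R -> Prop) : Prop :=
  forall eta, 0 < eta -> exists a c : nat -> R,
    (forall x, N x -> exists n, a n <= x <= c n) /\
    (forall n, a n <= c n) /\
    (forall m, sum_f_R0 (fun n => c n - a n) m <= eta).

Definition ess_le (f : R -> R) (s : R) : Prop :=
  null_set (fun x => in01 x /\ s < f x).

Definition weight (om : R -> R) : Prop :=
  measurable01 om /\ (forall x, in01 x -> 0 < om x) /\
  exists M, forall x, in01 x -> om x <= M /\ / om x <= M.

Definition admissible (b : nat) (gam : R) (psi : R -> R) (q : nat)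
  (V : R -> list nat -> list nat -> R) : Prop :=
  (forall u v, is_word b q u -> is_word b q v -> measurable01 (fun x => V x u v)) /\
  (forall x u v, in01 x -> is_word b q u -> is_word b q v -> 0 <= V x u v) /\
  exists eps del, 0 < eps /\ 0 < del /\
    forall x u v, in01 x -> inE b gam psi q x eps del u v ->
      1 <= V x u v * V x v u.

Definition Sigma (b q : nat) (V : R -> list nat -> list nat -> R) (om : R -> R)
  (x : R) : R :=
  fold_right Rmax 0
    (map (fun u => om x / om (xw b x u) *
                   fold_right Rplus 0 (map (fun v => V x u v) (words b q)))
         (words b q)).

(** sigma(q) <= t, sigma(q) being the infimum of ||Sigma_{V,om}||_infty *)
Definition sigma_le (b : nat) (gam : R) (psi : R -> R) (q : nat) (t : R) : Prop :=
  forall s, t < s -> exists om V,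
    weight om /\ admissible b gam psi q V /\ ess_le (Sigma b q V om) s.

Definition t_eq (t : R) : Prop :=
  / (t ^ 2 - 1) + 2 / (t ^ 3 - 2) + 1 = t ^ 2.

From Pilot Require Import Defs.
From Stdlib Require Import Reals List Lra Lia Classical ClassicalEpsilon ZArith.
Open Scope R_scope.

(* The weight is [1] on [K0], [t/2] on [K1] and [1/t] on [K2]; the testing function is [1]
   on the diagonal, [0] off [E], and takes the values [mu = 1/(t^2-1)], [1/mu],
   [nu = 2/(t^3-2)], [1/nu] on the few pairs that condition (iii) allows in [E].  The
   equation defining [t] is exactly what bounds every row of [Sigma] by [t].

   The substance is measurability: [x |-> (u,v) in E(q,x)] must be Borel.  Tangency of two
   sequences is equivalent to tangency, up to the geometric truncation error, of all the
   partial sums of [S] and [S']; at each level this depends on finitely many letters and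
   continuously on [x], and Koenig's lemma recovers infinite sequences from solutions at
   every finite level. *)

(** * Geometric series *)

Lemma pow_vanishes g K e : 0 <= g < 1 -> 0 < e ->
  exists N, forall n, (N <= n)%nat -> K * g ^ n < e.
Proof.
  intros hg he.
  assert (hK : 0 < Rabs K + 1) by (pose proof (Rabs_pos K); lra).
  destruct (pow_lt_1_zero g ltac:(rewrite Rabs_right; lra) (e / (Rabs K + 1)))
    as [N HN]; [apply Rdiv_lt_0_compat; lra|].
  exists N; intros n hn. specialize (HN n hn).
  rewrite Rabs_right in HN by (apply Rle_ge, pow_le; lra).
  assert (hgn : 0 <= g ^ n) by (apply pow_le; lra).
  apply Rle_lt_trans with ((Rabs K + 1) * g ^ n).
  - pose proof (Rle_abs K). nra.
  - apply (Rmult_lt_compat_l (Rabs K + 1)) in HN; [|lra].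
    replace ((Rabs K + 1) * (e / (Rabs K + 1))) with e in HN by (field; lra). lra.
Qed.

Lemma le_of_geometric_slack a c K g m : 0 <= g < 1 ->
  (forall N, a <= c + K * g ^ (N + m)) -> a <= c.
Proof.
  intros hg H. apply Rle_plus_epsilon. intros e he.
  destruct (pow_vanishes g K e hg he) as [N HN].
  specialize (H N). specialize (HN (N + m)%nat ltac:(lia)). lra.
Qed.

Section DominatedSeries.
Variables (a : nat -> R) (C g : R).
Hypothesis hg : 0 <= g < 1.
Hypothesis ha : forall k, Rabs (a k) <= C * g ^ k.

Lemma dominating_constant_nonneg : 0 <= C.
Proof. specialize (ha 0). simpl in ha. pose proof (Rabs_pos (a 0)). lra. Qed.

Lemma dominated_partial_sum_diff n m : (n <= m)%nat ->
  Rabs (sum_f_R0 a m - sum_f_R0 a n) <= C * (g ^ S n - g ^ S m) / (1 - g).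
Proof.
  induction 1 as [|m _ IH].
  - unfold Rminus. rewrite !Rplus_opp_r, Rabs_R0, Rmult_0_r. lra.
  - rewrite tech5.
    replace (sum_f_R0 a m + a (S m) - sum_f_R0 a n)
      with ((sum_f_R0 a m - sum_f_R0 a n) + a (S m)) by ring.
    eapply Rle_trans; [apply Rabs_triang|].
    replace (C * (g ^ S n - g ^ S (S m)) / (1 - g))
      with (C * (g ^ S n - g ^ S m) / (1 - g) + C * g ^ S m) by (simpl; field; lra).
    specialize (ha (S m)). lra.
Qed.

Lemma dominated_partial_sum_diff_le n m : (n <= m)%nat ->
  Rabs (sum_f_R0 a m - sum_f_R0 a n) <= C * g ^ S n / (1 - g).
Proof.
  intros hnm. eapply Rle_trans; [apply dominated_partial_sum_diff, hnm|].
  pose proof dominating_constant_nonneg. pose proof (pow_le g (S m) (proj1 hg)).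
  apply Rmult_le_compat_r; [left; apply Rinv_0_lt_compat; lra | nra].
Qed.

Lemma dominated_series_cv : exists l, infinite_sum a l.
Proof.
  destruct (R_complete (sum_f_R0 a)) as [l Hl]; [|exists l; exact Hl].
  intros e he. destruct (pow_vanishes g (C * g / (1 - g)) e hg he) as [N HN].
  assert (close : forall n m, (N <= n <= m)%nat -> Rabs (sum_f_R0 a m - sum_f_R0 a n) < e).
  { intros n m [hn hm]. eapply Rle_lt_trans; [apply dominated_partial_sum_diff_le, hm|].
    specialize (HN n hn). replace (C * g ^ S n / (1 - g)) with (C * g / (1 - g) * g ^ n)
      by (simpl; field; lra). exact HN. }
  exists N. intros n m hn hm. unfold Rdist. destruct (Nat.le_ge_cases n m).
  - rewrite Rabs_minus_sym. apply close; lia.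
  - apply close; lia.
Qed.

Lemma dominated_series_tail l : infinite_sum a l -> forall n,
  Rabs (l - sum_f_R0 a n) <= C * g ^ S n / (1 - g).
Proof.
  intros Hl n. apply Rle_plus_epsilon. intros e he.
  destruct (Hl e he) as [N HN]. specialize (HN (max N n) ltac:(lia)). unfold Rdist in HN.
  pose proof (dominated_partial_sum_diff_le n (max N n) ltac:(lia)).
  replace (l - sum_f_R0 a n) with
    ((sum_f_R0 a (max N n) - sum_f_R0 a n) - (sum_f_R0 a (max N n) - l)) by ring.
  eapply Rle_trans; [apply Rabs_triang|]. rewrite Rabs_Ropp. lra.
Qed.

Lemma epsilon_infinite_sum : infinite_sum a (epsilon (inhabits 0) (infinite_sum a)).
Proof. apply epsilon_spec, dominated_series_cv. Qed.

End DominatedSeries.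

Lemma Rabs_diff_triangle a1 a2 b1 b2 r1 r2 c :
  Rabs (a1 - b1) <= r1 -> Rabs (a2 - b2) <= r2 -> Rabs (b1 - b2) <= c ->
  Rabs (a1 - a2) <= c + r1 + r2.
Proof. unfold Rabs. repeat destruct Rcase_abs; lra. Qed.

Definition geometric_tail (C g : R) (n : nat) : R := C * g ^ S n / (1 - g).

Section DominatedSeriesPair.
Variables (a1 a2 : nat -> R) (C g c : R).
Hypothesis hg : 0 <= g < 1.
Hypothesis ha1 : forall k, Rabs (a1 k) <= C * g ^ k.
Hypothesis ha2 : forall k, Rabs (a2 k) <= C * g ^ k.

Lemma partial_sums_close_of_limits L1 L2 n :
  infinite_sum a1 L1 -> infinite_sum a2 L2 -> Rabs (L1 - L2) <= c ->
  Rabs (sum_f_R0 a1 n - sum_f_R0 a2 n) <= c + 2 * geometric_tail C g n.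
Proof.
  intros h1 h2 hL.
  pose proof (dominated_series_tail a1 C g hg ha1 L1 h1 n) as tail1.
  pose proof (dominated_series_tail a2 C g hg ha2 L2 h2 n) as tail2.
  rewrite Rabs_minus_sym in tail1, tail2.
  pose proof (Rabs_diff_triangle _ _ _ _ _ _ _ tail1 tail2 hL). unfold geometric_tail. lra.
Qed.

Lemma limits_close_of_partial_sums L1 L2 m :
  infinite_sum a1 L1 -> infinite_sum a2 L2 ->
  (forall N, Rabs (sum_f_R0 a1 (N + m) - sum_f_R0 a2 (N + m))
               <= c + 2 * geometric_tail C g (N + m)) ->
  Rabs (L1 - L2) <= c.
Proof.
  intros h1 h2 H.
  apply (le_of_geometric_slack _ c (4 * C / (1 - g)) g (S m) hg). intros N.
  pose proof (dominated_series_tail a1 C g hg ha1 L1 h1 (N + m)) as tail1.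
  pose proof (dominated_series_tail a2 C g hg ha2 L2 h2 (N + m)) as tail2.
  pose proof (Rabs_diff_triangle _ _ _ _ _ _ _ tail1 tail2 (H N)).
  unfold geometric_tail in *. replace (N + S m)%nat with (S (N + m)) by lia.
  replace (4 * C / (1 - g) * g ^ S (N + m)) with (4 * (C * g ^ S (N + m) / (1 - g)))
    by (field; lra). lra.
Qed.

Lemma partial_sums_close_restrict n m : (n <= m)%nat ->
  Rabs (sum_f_R0 a1 m - sum_f_R0 a2 m) <= c + 2 * geometric_tail C g m ->
  Rabs (sum_f_R0 a1 n - sum_f_R0 a2 n) <= c + 2 * geometric_tail C g n.
Proof.
  intros hnm H. unfold geometric_tail in *.
  pose proof (dominated_partial_sum_diff a1 C g hg ha1 n m hnm) as diff1.
  pose proof (dominated_partial_sum_diff a2 C g hg ha2 n m hnm) as diff2.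
  rewrite Rabs_minus_sym in diff1, diff2.
  pose proof (Rabs_diff_triangle _ _ _ _ _ _ _ diff1 diff2 H) as Hn.
  replace (C * (g ^ S n - g ^ S m) / (1 - g))
    with (C * g ^ S n / (1 - g) - C * g ^ S m / (1 - g)) in Hn by (field; lra).
  lra.
Qed.

End DominatedSeriesPair.

(** * Borel subsets of [0,1) *)

Lemma borel_iff (A B : R -> Prop) : borel A -> (forall x, A x <-> B x) -> borel B.
Proof. intros H E; exact (borel_ext A B E H). Qed.

Lemma borel_union2 A B : borel A -> borel B -> borel (fun x => A x \/ B x).
Proof.
  intros HA HB.
  apply borel_iff with (fun x => exists n, (if Nat.eqb n 0 then A else B) x).
  - apply borel_union. intros [|n]; assumption.
  - intros x; split.
    + intros [[|n] H]; auto.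
    + intros [H|H]; [exists 0%nat | exists 1%nat]; assumption.
Qed.

Lemma borel_inter2 A B : borel A -> borel B -> borel (fun x => A x /\ B x).
Proof.
  intros HA HB. apply borel_iff with (fun x => ~ (~ A x \/ ~ B x)).
  - apply borel_compl, borel_union2; apply borel_compl; assumption.
  - intros x. tauto.
Qed.

Lemma borel_countable_inter (A : nat -> R -> Prop) : (forall n, borel (A n)) ->
  borel (fun x => forall n, A n x).
Proof.
  intros HA. apply borel_iff with (fun x => ~ exists n, ~ A n x).
  - apply borel_compl, borel_union. intros n; apply borel_compl, HA.
  - intros x; split.
    + intros H n. apply NNPP; intro; apply H; eauto.
    + intros H [n Hn]; auto.
Qed.

Lemma borel_preimage (f : R -> R) A : continuity f -> borel A -> borel (fun x => A (f x)).
Proof.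
  intros Hf HA. induction HA.
  - apply borel_open, (proj1 (continuity_P3 f) Hf), H.
  - apply borel_compl, IHHA.
  - apply borel_union, H0.
  - apply borel_iff with (fun x => A (f x)); auto.
Qed.

Lemma open_set_lt c : open_set (fun y => y < c).
Proof.
  intros x Hx. assert (Hp : 0 < c - x) by lra.
  exists (mkposreal _ Hp). intros y Hy. unfold disc in Hy; simpl in Hy.
  apply Rabs_def2 in Hy. lra.
Qed.

Lemma borel_le_continuous (h : R -> R) c : continuity h -> borel (fun x => h x <= c).
Proof.
  intros Hh. apply borel_iff with (fun x => ~ (c - h x < 0)).
  - apply borel_compl, (borel_preimage (fun x => c - h x) (fun y => y < 0)).
    + intros x. apply continuity_pt_minus; [|apply Hh].
      apply continuity_pt_const. intros ? ?. reflexivity.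
    + apply borel_open, open_set_lt.
  - intros x; lra.
Qed.

Lemma borel_in01 : borel in01.
Proof.
  apply borel_iff with (fun x => ~ (x < 0) /\ x < 1).
  - apply borel_inter2; [apply borel_compl|]; apply borel_open, open_set_lt.
  - unfold in01; intros x; lra.
Qed.

Definition borel01 (P : R -> Prop) : Prop := borel (fun x => in01 x /\ P x).

Lemma borel01_ext P Q : borel01 P -> (forall x, in01 x -> (P x <-> Q x)) -> borel01 Q.
Proof.
  intros HP E. apply borel_iff with (fun x => in01 x /\ P x); [exact HP|].
  intros x; split; intros [H1 H2]; split; auto; apply E; auto.
Qed.

Lemma borel01_of_borel P : borel P -> borel01 P.
Proof. intros HP. apply borel_inter2; [apply borel_in01 | exact HP]. Qed.

Lemma borel01_and P Q : borel01 P -> borel01 Q -> borel01 (fun x => P x /\ Q x).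
Proof.
  intros HP HQ. apply borel_iff with (fun x => (in01 x /\ P x) /\ (in01 x /\ Q x)).
  - apply borel_inter2; assumption.
  - intros x; tauto.
Qed.

Lemma borel01_or P Q : borel01 P -> borel01 Q -> borel01 (fun x => P x \/ Q x).
Proof.
  intros HP HQ. apply borel_iff with (fun x => (in01 x /\ P x) \/ (in01 x /\ Q x)).
  - apply borel_union2; assumption.
  - intros x; tauto.
Qed.

Lemma borel01_not P : borel01 P -> borel01 (fun x => ~ P x).
Proof.
  intros HP. apply borel_iff with (fun x => in01 x /\ ~ (in01 x /\ P x)).
  - apply borel_inter2; [apply borel_in01 | apply borel_compl, HP].
  - intros x; tauto.
Qed.

Lemma borel01_const (P : Prop) : borel01 (fun _ => P).
Proof.
  destruct (classic P) as [H|H].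
  - apply borel01_ext with (fun x => x < 2); [apply borel01_of_borel, borel_open, open_set_lt|].
    unfold in01; intros x hx; split; intros; [exact H | lra].
  - apply borel01_ext with (fun x => x < 0); [apply borel01_of_borel, borel_open, open_set_lt|].
    unfold in01; intros x hx; split; intros; [lra | contradiction].
Qed.

Lemma borel01_exists_list {T} (l : list T) (P : T -> R -> Prop) :
  (forall a, In a l -> borel01 (P a)) -> borel01 (fun x => exists a, In a l /\ P a x).
Proof.
  induction l as [|a l IH]; intros H.
  - apply borel01_ext with (fun _ => False); [apply borel01_const|].
    intros x _; split; [tauto | intros [a [[] _]]].
  - apply borel01_ext with (fun x => P a x \/ exists a', In a' l /\ P a' x).
    + apply borel01_or; [apply H; left; reflexivity | apply IH; intros; apply H; right; auto].
    + intros x _; split.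
      * intros [Hx|[a' [Ha' Hx]]]; [exists a | exists a']; simpl; auto.
      * intros [a' [[<-|Ha'] Hx]]; [left; exact Hx | right; eauto].
Qed.

Lemma borel01_forall_nat (P : nat -> R -> Prop) :
  (forall n, borel01 (P n)) -> borel01 (fun x => forall n, P n x).
Proof.
  intros H. apply borel_iff with (fun x => in01 x /\ forall n, in01 x /\ P n x).
  - apply borel_inter2; [apply borel_in01 | apply borel_countable_inter, H].
  - intros x; split; [intros [h1 h2]; split; [exact h1 | intros n; apply h2]
                     | intros [h1 h2]; split; [exact h1 | intros n; split; auto]].
Qed.

Lemma measurable01_const c : measurable01 (fun _ => c).
Proof. intros B _. apply borel01_const. Qed.

Lemma measurable01_if (P : R -> Prop) f g :
  borel01 P -> measurable01 f -> measurable01 g ->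
  measurable01 (fun x => if excluded_middle_informative (P x) then f x else g x).
Proof.
  intros HP Hf Hg B HB.
  apply borel_iff with (fun x => (in01 x /\ P x) /\ (in01 x /\ B (f x)) \/
                                   (in01 x /\ ~ P x) /\ (in01 x /\ B (g x))).
  - apply borel_union2; apply borel_inter2; auto. apply borel01_not, HP.
  - intros x; destruct (excluded_middle_informative (P x)); tauto.
Qed.

Lemma In_words b q p : In p (words b q) <-> is_word b q p.
Proof.
  revert p. induction q as [|q IH]; intros p; simpl.
  - split.
    + intros [<-|[]]. split; auto.
    + intros [H _]. destruct p; [auto | discriminate].
  - rewrite in_flat_map. split.
    + intros [d [Hd Hp]]. apply in_map_iff in Hp. destruct Hp as [p' [<- Hp']].
      apply IH in Hp'. destruct Hp' as [H1 H2]. apply in_seq in Hd.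
      split; [simpl; lia | constructor; [lia | exact H2]].
    + intros [H1 H2]. destruct p as [|d p']; [discriminate|].
      inversion H2; subst. exists d. split; [apply in_seq; lia|].
      apply in_map, IH. split; auto.
Qed.

Lemma NoDup_words b q : NoDup (words b q).
Proof.
  induction q as [|q IH]; simpl; [repeat constructor; auto|].
  generalize (words b q) IH; clear IH; intros W HW.
  generalize 0%nat. induction b as [|n IHb]; intros s; simpl; [constructor|].
  apply NoDup_app.
  - apply NoDup_map_NoDup_ForallPairs; [|exact HW]. intros x y _ _ H; inversion H; auto.
  - apply IHb.
  - intros x Hx Hy. apply in_map_iff in Hx. destruct Hx as [p [<- _]].
    apply in_flat_map in Hy. destruct Hy as [d [Hd Hp]]. apply in_seq in Hd.
    apply in_map_iff in Hp. destruct Hp as [p' [E _]]. inversion E. lia.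
Qed.

Definition word_seq (p : list nat) : nat -> nat := fun n => nth n p 0%nat.

Definition prefix (f : nat -> nat) (N : nat) : list nat := map f (seq 0 N).

Lemma prefix_in_words b N f : (forall j, (j < N)%nat -> (f j < b)%nat) ->
  In (prefix f N) (words b N).
Proof.
  intros H. apply In_words. split; [unfold prefix; rewrite length_map, length_seq; reflexivity|].
  apply Forall_forall. intros x Hx. apply in_map_iff in Hx. destruct Hx as [j [<- Hj]].
  apply in_seq in Hj. apply H. lia.
Qed.

Lemma word_seq_prefix N f j : (j < N)%nat -> word_seq (prefix f N) j = f j.
Proof.
  intros H. unfold word_seq, prefix.
  rewrite nth_indep with (d' := f 0%nat) by (rewrite length_map, length_seq; exact H).
  rewrite map_nth, seq_nth; [reflexivity | exact H].
Qed.

Lemma word_seq_lt b N p : In p (words b N) -> forall j, (j < N)%nat -> (word_seq p j < b)%nat.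
Proof.
  intros H j Hj. apply In_words in H. destruct H as [H1 H2].
  rewrite Forall_forall in H2. apply H2, nth_In. lia.
Qed.

(** * Koenig's lemma *)

Definition agree {A} (m : nat) (f f' : nat -> A) : Prop :=
  forall j, (j < m)%nat -> f j = f' j.

Section Konig.
Variables (A : Type) (alph : list A) (Q : nat -> (nat -> A) -> Prop).
Hypothesis Q_restrict : forall m N f, (m <= N)%nat -> Q N f -> Q m f.
Hypothesis Q_agree : forall N f f', agree N f f' -> Q N f -> Q N f'.

Definition letters_in (N : nat) (f : nat -> A) : Prop :=
  forall j, (j < N)%nat -> In (f j) alph.

(* The first [m] letters of [f] start paths of every depth in the tree cut out by [Q]. *)
Definition extendable (m : nat) (f : nat -> A) : Prop :=
  forall N, (m <= N)%nat -> exists f', agree m f f' /\ letters_in N f' /\ Q N f'.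

Definition set_letter (f : nat -> A) (m : nat) (d : A) : nat -> A :=
  fun j => if Nat.eqb j m then d else f j.

Lemma agree_set_letter f m d : agree m f (set_letter f m d).
Proof. intros j Hj. unfold set_letter. destruct (Nat.eqb_spec j m); [lia | reflexivity]. Qed.

Lemma extendable_mono m f N N' : (N <= N')%nat ->
  (exists f', agree m f f' /\ letters_in N' f' /\ Q N' f') ->
  exists f', agree m f f' /\ letters_in N f' /\ Q N f'.
Proof.
  intros HN [f' [h1 [h2 h3]]]. exists f'. split; [exact h1|].
  split; [intros j Hj; apply h2; lia | exact (Q_restrict N N' f' HN h3)].
Qed.

Lemma finite_max_bound (Bad : A -> nat -> Prop) (l : list A) :
  (forall d N N', (N <= N')%nat -> Bad d N -> Bad d N') ->
  (forall d, In d l -> exists N, Bad d N) -> exists N, forall d, In d l -> Bad d N.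
Proof.
  intros Hmono. induction l as [|d l IH]; intros H; [exists 0%nat; intros d []|].
  destruct IH as [N1 HN1]; [intros; apply H; right; auto|].
  destruct (H d (or_introl eq_refl)) as [N2 HN2].
  exists (max N1 N2). intros d' [<-|Hd'].
  - apply Hmono with N2; [lia | exact HN2].
  - apply Hmono with N1; [lia | apply HN1, Hd'].
Qed.

Lemma extendable_step m f : extendable m f ->
  exists d, In d alph /\ extendable (S m) (set_letter f m d).
Proof.
  intros Hext. apply NNPP. intros Hnone.
  set (Bad := fun d N => (S m <= N)%nat /\
    ~ exists f', agree (S m) (set_letter f m d) f' /\ letters_in N f' /\ Q N f').
  assert (Bad_mono : forall d N N', (N <= N')%nat -> Bad d N -> Bad d N').
  { intros d N N' HN [h1 h2]. split; [lia|]. intros H. apply h2.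
    exact (extendable_mono _ _ _ _ HN H). }
  destruct (finite_max_bound Bad alph Bad_mono) as [N HN].
  { intros d Hd. apply NNPP. intros Hgood. apply Hnone. exists d. split; [exact Hd|].
    intros N HN. apply NNPP. intros Hc. apply Hgood. exists N. split; auto. }
  destruct (Hext (max N (S m)) ltac:(lia)) as [f' [Hag [Hlet HQ]]].
  assert (Hd : In (f' m) alph) by (apply Hlet; lia).
  destruct (Bad_mono (f' m) N (max N (S m)) ltac:(lia) (HN _ Hd)) as [_ Hno].
  apply Hno. exists f'. split; [|split; assumption].
  intros j Hj. unfold set_letter. destruct (Nat.eqb_spec j m) as [->|]; [reflexivity|].
  apply Hag. lia.
Qed.

Definition next_branch (m : nat) (f : nat -> A) : nat -> A :=
  epsilon (inhabits f) (fun f' => extendable (S m) f' /\ agree m f f').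

Fixpoint branch (f0 : nat -> A) (m : nat) : nat -> A :=
  match m with
  | O => f0
  | S m' => next_branch m' (branch f0 m')
  end.

Lemma next_branch_spec m f : extendable m f ->
  extendable (S m) (next_branch m f) /\ agree m f (next_branch m f).
Proof.
  intros H. unfold next_branch. apply epsilon_spec.
  destruct (extendable_step m f H) as [d [_ Hd]].
  exists (set_letter f m d). split; [exact Hd | apply agree_set_letter].
Qed.

Theorem konig_lemma : (forall N, exists f, letters_in N f /\ Q N f) ->
  exists s, (forall n, In (s n) alph) /\ forall N, Q N s.
Proof.
  intros Hfin. destruct (Hfin 0%nat) as [f0 _].
  assert (Hext : forall m, extendable m (branch f0 m)).
  { induction m as [|m IH].
    - intros N _. destruct (Hfin N) as [f [h1 h2]]. exists f. split; [intros j Hj; lia | auto].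
    - apply next_branch_spec, IH. }
  assert (Hagree : forall m m', (m <= m')%nat -> agree m (branch f0 m) (branch f0 m')).
  { induction 1 as [|m' Hm IH]; [intros j _; reflexivity|].
    intros j Hj. rewrite IH by exact Hj.
    apply (proj2 (next_branch_spec m' _ (Hext m'))). lia. }
  set (s := fun j => branch f0 (S j) j).
  assert (Hs : forall N, agree N (branch f0 N) s).
  { intros N j Hj. symmetry. apply (Hagree (S j) N Hj). lia. }
  exists s. split.
  - intros n. destruct (Hext (S n) (S n) (le_n _)) as [f' [Hag [Hlet _]]].
    unfold s. rewrite (Hag n) by lia. apply Hlet. lia.
  - intros N. destruct (Hext N N (le_n _)) as [f' [Hag [_ HQ]]].
    apply Q_agree with f'; [|exact HQ].
    intros j Hj. rewrite <- (Hag j Hj). exact (Hs N j Hj).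
Qed.

End Konig.

(** * The series [S] and [S'] *)

Lemma derivable_pt_lim_affine D B y : derivable_pt_lim (fun z => (z + D) / B) y (/ B).
Proof.
  replace (/ B) with (/ B * (1 + 0)) by ring.
  apply derivable_pt_lim_ext with (mult_real_fct (/ B) (id + fct_cte D)%F).
  { intros z. unfold mult_real_fct, plus_fct, fct_cte, id, Rdiv. ring. }
  apply derivable_pt_lim_scal, derivable_pt_lim_plus;
    [apply derivable_pt_lim_id | apply derivable_pt_lim_const].
Qed.

Lemma continuity_affine D B : continuity (fun z => (z + D) / B).
Proof.
  intros y. apply derivable_continuous_pt. exists (/ B). apply derivable_pt_lim_affine.
Qed.

Section Periodic.
Variable f : R -> R.
Hypothesis f_periodic : forall x, f (x + 1) = f x.

Lemma periodic_shift_nat n x : f (x + INR n) = f x.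
Proof.
  induction n as [|n IH]; [simpl; rewrite Rplus_0_r; reflexivity|].
  rewrite S_INR, <- Rplus_assoc, f_periodic. exact IH.
Qed.

Lemma periodic_shift_Z z x : f (x + IZR z) = f x.
Proof.
  destruct (Z_le_gt_dec 0 z).
  - rewrite <- (Z2Nat.id z), <- INR_IZR_INZ by lia. apply periodic_shift_nat.
  - replace z with (- Z.of_nat (Z.to_nat (- z)))%Z by lia.
    rewrite opp_IZR, <- INR_IZR_INZ.
    set (n := Z.to_nat (- z)). rewrite <- (periodic_shift_nat n (x + - INR n)).
    f_equal. ring.
Qed.

Lemma periodic_continuous_bounded : continuity f -> exists M, forall x, Rabs (f x) <= M.
Proof.
  intros hf.
  destruct (continuity_ab_maj f 0 1 ltac:(lra) (fun c _ => hf c)) as [xM [HM _]].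
  destruct (continuity_ab_min f 0 1 ltac:(lra) (fun c _ => hf c)) as [xm [Hm _]].
  exists (Rmax (f xM) (- f xm)). intros x.
  destruct (archimed x) as [h1 h2].
  set (y := x - IZR (up x) + 1).
  assert (Ex : f x = f y).
  { unfold y. rewrite <- (periodic_shift_Z (up x - 1) (x - IZR (up x) + 1)), minus_IZR.
    f_equal. ring. }
  assert (Hy : 0 <= y <= 1) by (unfold y; lra).
  rewrite Ex. specialize (HM y Hy). specialize (Hm y Hy).
  pose proof (Rmax_l (f xM) (- f xm)). pose proof (Rmax_r (f xM) (- f xm)).
  apply Rabs_le. lra.
Qed.

End Periodic.

Lemma derivative_periodic (f f' : R -> R) : (forall x, f (x + 1) = f x) ->
  (forall x, derivable_pt_lim f x (f' x)) -> forall x, f' (x + 1) = f' x.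
Proof.
  intros hper hf' x. apply (uniqueness_limite f x); [|apply hf'].
  pose proof (derivable_pt_lim_comp _ f x _ _ (derivable_pt_lim_affine 1 1 x)
    (hf' ((x + 1) / 1))) as H.
  replace (f' (x + 1)) with (f' ((x + 1) / 1) * / 1)
    by (unfold Rdiv; rewrite Rinv_1, !Rmult_1_r; reflexivity).
  apply derivable_pt_lim_ext with (2 := H). intros z. unfold comp.
  rewrite <- (hper z). f_equal. field.
Qed.

Lemma digval_S b i m : digval b i (S m) = sum_f_R0 (fun k => INR (i k) * INR b ^ k) m.
Proof. unfold digval. rewrite tech5. ring. Qed.

Lemma digval_S_agree b i j m : agree (S m) i j -> digval b i (S m) = digval b j (S m).
Proof.
  intros H. rewrite !digval_S. apply sum_eq. intros k Hk. rewrite H by lia. reflexivity.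
Qed.

Section Series.
Variables (b : nat) (gam : R) (psi psi' : R -> R) (M0 M1 : R).
Hypothesis hb : (1 <= b)%nat.
Hypothesis hgam : 0 <= gam < 1.
Hypothesis psi_deriv : forall x, derivable_pt_lim psi x (psi' x).
Hypothesis psi'_cont : continuity psi'.
Hypothesis psi_bound : forall x, Rabs (psi x) <= M0.
Hypothesis psi'_bound : forall x, Rabs (psi' x) <= M1.

Definition Sterm' (x : R) (i : nat -> nat) (n : nat) : R :=
  gam ^ n * psi' ((x + digval b i (S n)) / INR b ^ S n) / INR b ^ S n.

Definition Sder_series (x : R) (i : nat -> nat) : R :=
  epsilon (inhabits 0) (infinite_sum (Sterm' x i)).

Definition Spartial (x : R) (i : nat -> nat) (n : nat) : R :=
  sum_f_R0 (Sterm b gam psi x i) n.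

Definition Spartial' (x : R) (i : nat -> nat) (n : nat) : R :=
  sum_f_R0 (Sterm' x i) n.

Lemma pow_b_ge_1 n : 1 <= INR b ^ n.
Proof.
  assert (1 <= INR b) by (apply (le_INR 1 b); lia).
  induction n; simpl; nra.
Qed.

Lemma Sterm_bound x i n : Rabs (Sterm b gam psi x i n) <= M0 * gam ^ n.
Proof.
  unfold Sterm. rewrite Rabs_mult, Rabs_right by (apply Rle_ge, pow_le; lra).
  rewrite Rmult_comm. apply Rmult_le_compat_r; [apply pow_le; lra | apply psi_bound].
Qed.

Lemma Sterm'_bound x i n : Rabs (Sterm' x i n) <= M1 * gam ^ n.
Proof.
  unfold Sterm'. pose proof (pow_b_ge_1 (S n)) as hB.
  set (y := (x + digval b i (S n)) / INR b ^ S n).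
  unfold Rdiv. rewrite !Rabs_mult, Rabs_right by (apply Rle_ge, pow_le; lra).
  rewrite (Rabs_right (/ INR b ^ S n)) by (apply Rle_ge; left; apply Rinv_0_lt_compat; lra).
  assert (hinv : / INR b ^ S n <= 1) by (rewrite <- Rinv_1; apply Rinv_le_contravar; lra).
  assert (0 < / INR b ^ S n) by (apply Rinv_0_lt_compat; lra).
  pose proof (psi'_bound y). pose proof (Rabs_pos (psi' y)). pose proof (pow_le gam n (proj1 hgam)).
  apply Rle_trans with (gam ^ n * Rabs (psi' y) * 1).
  - apply Rmult_le_compat_l; [apply Rmult_le_pos|]; lra.
  - rewrite Rmult_1_r, Rmult_comm. apply Rmult_le_compat_r; lra.
Qed.

Lemma Sfun_infinite_sum x i : infinite_sum (Sterm b gam psi x i) (Sfun b gam psi x i).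
Proof. exact (epsilon_infinite_sum _ M0 gam hgam (Sterm_bound x i)). Qed.

Lemma Sder_series_infinite_sum x i : infinite_sum (Sterm' x i) (Sder_series x i).
Proof. exact (epsilon_infinite_sum _ M1 gam hgam (Sterm'_bound x i)). Qed.

Lemma Sder_series_tail x i n :
  Rabs (Sder_series x i - Spartial' x i n) <= M1 * gam ^ S n / (1 - gam).
Proof.
  exact (dominated_series_tail _ M1 gam hgam (Sterm'_bound x i) _ (Sder_series_infinite_sum x i) n).
Qed.

Lemma Sterm_derivable i n y :
  derivable_pt_lim (fun z => Sterm b gam psi z i n) y (Sterm' y i n).
Proof.
  pose proof (derivable_pt_lim_comp _ psi y _ _
    (derivable_pt_lim_affine (digval b i (S n)) (INR b ^ S n) y) (psi_deriv _)) as Hc.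
  pose proof (derivable_pt_lim_scal _ (gam ^ n) y _ Hc) as H.
  replace (Sterm' y i n)
    with (gam ^ n * (psi' ((y + digval b i (S n)) / INR b ^ S n) * / INR b ^ S n))
    by (unfold Sterm', Rdiv; ring).
  apply derivable_pt_lim_ext with (2 := H).
  intros z. reflexivity.
Qed.

Lemma Spartial_derivable i n y :
  derivable_pt_lim (fun z => Spartial z i n) y (Spartial' y i n).
Proof.
  induction n as [|n IH]; [apply Sterm_derivable|].
  unfold Spartial, Spartial'. simpl.
  apply (derivable_pt_lim_plus (fun z => Spartial z i n) (fun z => Sterm b gam psi z i (S n)));
    [exact IH | apply Sterm_derivable].
Qed.

Lemma Sfun_derivable x i :
  derivable_pt_lim (fun y => Sfun b gam psi y i) x (Sder_series x i).
Proof.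
  apply (CVU_derivable (fun n z => Spartial z i n) (fun n z => Spartial' z i n)
    (fun y => Sfun b gam psi y i) (fun y => Sder_series y i) x (mkposreal 1 Rlt_0_1)).
  - intros e he. destruct (pow_vanishes gam (M1 * gam / (1 - gam)) e hgam he) as [N HN].
    exists N. intros n y hn _. eapply Rle_lt_trans; [apply Sder_series_tail|].
    replace (M1 * gam ^ S n / (1 - gam)) with (M1 * gam / (1 - gam) * gam ^ n)
      by (simpl; field; lra).
    apply HN, hn.
  - intros y _. apply Sfun_infinite_sum.
  - intros n y _. apply Spartial_derivable.
  - unfold Boule; simpl. rewrite Rminus_diag, Rabs_R0. lra.
Qed.

Lemma Sder_eq x i : Sder b gam psi x i = Sder_series x i.
Proof.
  apply (uniqueness_limite (fun y => Sfun b gam psi y i) x); [|apply Sfun_derivable].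
  unfold Sder. apply epsilon_spec. exists (Sder_series x i). apply Sfun_derivable.
Qed.

Lemma Spartial_agree x i j n : agree (S n) i j -> Spartial x i n = Spartial x j n.
Proof.
  intros H. apply sum_eq. intros k Hk. unfold Sterm.
  rewrite (digval_S_agree b i j k); [reflexivity|]. intros m Hm; apply H; lia.
Qed.

Lemma Spartial'_agree x i j n : agree (S n) i j -> Spartial' x i n = Spartial' x j n.
Proof.
  intros H. apply sum_eq. intros k Hk. unfold Sterm'.
  rewrite (digval_S_agree b i j k); [reflexivity|]. intros m Hm; apply H; lia.
Qed.

Lemma Spartial_continuous i n : continuity (fun x => Spartial x i n).
Proof.
  intros y. apply derivable_continuous_pt. exists (Spartial' y i n). apply Spartial_derivable.
Qed.

Lemma Sterm'_continuous i n : continuity (fun x => Sterm' x i n).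
Proof.
  unfold Sterm', Rdiv. intros y.
  apply continuity_pt_mult; [|apply continuity_pt_const; intros ? ?; reflexivity].
  apply continuity_pt_mult; [apply continuity_pt_const; intros ? ?; reflexivity|].
  apply (continuity_pt_comp (fun x => (x + digval b i (S n)) * / INR b ^ S n) psi');
    [apply continuity_affine | apply psi'_cont].
Qed.

Lemma Spartial'_continuous i n : continuity (fun x => Spartial' x i n).
Proof.
  induction n as [|n IH]; intros y; [apply Sterm'_continuous|].
  apply (continuity_pt_plus (fun x => Spartial' x i n) (fun x => Sterm' x i (S n)));
    [apply IH | apply Sterm'_continuous].
Qed.

Section Tangency.
Variables (q : nat) (eps del : R) (k l : list nat).
Hypothesis hq : (1 <= q)%nat.
Hypothesis hk : length k = q.
Hypothesis hl : length l = q.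

(* The series are cut after the letters of [k] (resp. [l]) and the first [N] letters of
   [f] (resp. [g]); the slack [2 * geometric_tail] turns tangency into a condition on those
   finitely many letters (see [tangent_iff_near_tangent]). *)
Definition near_tangent (N : nat) (x : R) (f g : nat -> nat) : Prop :=
  Rabs (Spartial x (Defs.concat k f) (N + (q - 1))
        - Spartial x (Defs.concat l g) (N + (q - 1)))
    <= eps + 2 * geometric_tail M0 gam (N + (q - 1)) /\
  Rabs (Spartial' x (Defs.concat k f) (N + (q - 1))
        - Spartial' x (Defs.concat l g) (N + (q - 1)))
    <= del + 2 * geometric_tail M1 gam (N + (q - 1)).

Lemma concat_agree w N f f' : length w = q -> agree N f f' ->
  agree (S (N + (q - 1))) (Defs.concat w f) (Defs.concat w f').
Proof.
  intros Hw Ha j Hj. unfold Defs.concat. rewrite Hw.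
  destruct (Nat.ltb_spec j q); [reflexivity|]. apply Ha. lia.
Qed.

Lemma near_tangent_agree N x f g f' g' : agree N f f' -> agree N g g' ->
  near_tangent N x f g -> near_tangent N x f' g'.
Proof.
  intros Hf Hg. unfold near_tangent.
  rewrite (Spartial_agree x (Defs.concat k f) (Defs.concat k f')),
    (Spartial_agree x (Defs.concat l g) (Defs.concat l g')),
    (Spartial'_agree x (Defs.concat k f) (Defs.concat k f')),
    (Spartial'_agree x (Defs.concat l g) (Defs.concat l g'));
    auto using concat_agree.
Qed.

Lemma near_tangent_restrict m N x f g : (m <= N)%nat ->
  near_tangent N x f g -> near_tangent m x f g.
Proof.
  intros hmN [H1 H2]. split.
  - apply (partial_sums_close_restrict _ _ M0 gam eps hgam (Sterm_bound x _) (Sterm_bound x _)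
      _ (N + (q - 1))); [lia | exact H1].
  - apply (partial_sums_close_restrict _ _ M1 gam del hgam (Sterm'_bound x _) (Sterm'_bound x _)
      _ (N + (q - 1))); [lia | exact H2].
Qed.

Lemma tangent_iff_near_tangent x f g :
  tangent b gam psi eps del x (Defs.concat k f) (Defs.concat l g) <->
  forall N, near_tangent N x f g.
Proof.
  unfold tangent. rewrite !Sder_eq. split.
  - intros [H1 H2] N. split.
    + exact (partial_sums_close_of_limits _ _ M0 gam eps hgam (Sterm_bound x _) (Sterm_bound x _)
        _ _ _ (Sfun_infinite_sum x _) (Sfun_infinite_sum x _) H1).
    + exact (partial_sums_close_of_limits _ _ M1 gam del hgam (Sterm'_bound x _) (Sterm'_bound x _)
        _ _ _ (Sder_series_infinite_sum x _) (Sder_series_infinite_sum x _) H2).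
  - intros H. split.
    + exact (limits_close_of_partial_sums _ _ M0 gam eps hgam (Sterm_bound x _) (Sterm_bound x _)
        _ _ (q - 1) (Sfun_infinite_sum x _) (Sfun_infinite_sum x _) (fun N => proj1 (H N))).
    + exact (limits_close_of_partial_sums _ _ M1 gam del hgam (Sterm'_bound x _) (Sterm'_bound x _)
        _ _ (q - 1) (Sder_series_infinite_sum x _) (Sder_series_infinite_sum x _)
        (fun N => proj2 (H N))).
Qed.

Lemma borel_near_tangent N f g : borel (fun x => near_tangent N x f g).
Proof.
  apply borel_inter2; apply borel_le_continuous; intros y;
    apply (continuity_pt_comp _ Rabs); try apply Rcontinuity_abs;
    apply continuity_pt_minus.
  all: first [apply Spartial_continuous | apply Spartial'_continuous].
Qed.

Lemma inE_iff_near_tangent x : is_word b q k -> is_word b q l ->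
  inE b gam psi q x eps del k l <->
  forall N, exists p1 p2, In p1 (words b N) /\ In p2 (words b N) /\
    near_tangent N x (word_seq p1) (word_seq p2).
Proof.
  intros Wk Wl. unfold inE. split.
  - intros [_ [_ [u [v [hu [hv ht]]]]]] N.
    exists (prefix u N), (prefix v N).
    split; [apply prefix_in_words; intros; apply hu|].
    split; [apply prefix_in_words; intros; apply hv|].
    apply near_tangent_agree with u v;
      [intros j Hj; symmetry; apply word_seq_prefix, Hj
      | intros j Hj; symmetry; apply word_seq_prefix, Hj
      | apply tangent_iff_near_tangent, ht].
  - intros H. split; [exact Wk|]. split; [exact Wl|].
    set (alph := list_prod (seq 0 b) (seq 0 b)).
    set (Q := fun N (h : nat -> nat * nat) =>
      near_tangent N x (fun n => fst (h n)) (fun n => snd (h n))).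
    destruct (konig_lemma _ alph Q) as [s [Hs HQ]].
    + intros m N h hmN. apply near_tangent_restrict, hmN.
    + intros N h h' Ha. apply near_tangent_agree; intros j Hj; rewrite Ha by exact Hj; reflexivity.
    + intros N. destruct (H N) as [p1 [p2 [i1 [i2 Hn]]]].
      exists (fun n => (word_seq p1 n, word_seq p2 n)). split; [|exact Hn].
      intros j Hj. apply in_prod_iff. rewrite !in_seq.
      pose proof (word_seq_lt b N p1 i1 j Hj). pose proof (word_seq_lt b N p2 i2 j Hj). lia.
    + assert (Hs' : forall n, (fst (s n) < b)%nat /\ (snd (s n) < b)%nat).
      { intros n. specialize (Hs n). destruct (s n) as [u v].
        apply in_prod_iff in Hs. rewrite !in_seq in Hs. simpl. lia. }
      exists (fun n => fst (s n)), (fun n => snd (s n)).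
      split; [intros n; apply Hs'|]. split; [intros n; apply Hs'|].
      apply tangent_iff_near_tangent, HQ.
Qed.

Lemma borel01_inE : borel01 (fun x => inE b gam psi q x eps del k l).
Proof.
  destruct (classic (is_word b q k /\ is_word b q l)) as [[Wk Wl]|Hw].
  - apply borel01_ext with (fun x => forall N, exists p1 p2, In p1 (words b N) /\
        In p2 (words b N) /\ near_tangent N x (word_seq p1) (word_seq p2)).
    + apply borel01_forall_nat. intros N.
      apply borel01_ext with (fun x => exists p1, In p1 (words b N) /\
        exists p2, In p2 (words b N) /\ near_tangent N x (word_seq p1) (word_seq p2)).
      * apply borel01_exists_list. intros p1 _. apply borel01_exists_list. intros p2 _.
        apply borel01_of_borel, borel_near_tangent.
      * intros x _. firstorder.
    + intros x _. symmetry. apply inE_iff_near_tangent; assumption.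
  - apply borel01_ext with (fun _ => False); [apply borel01_const|].
    intros x _. unfold inE. tauto.
Qed.

End Tangency.

End Series.

Definition rsum {A} (l : list A) (f : A -> R) : R := fold_right Rplus 0 (map f l).

Lemma rsum_app {A} (l1 l2 : list A) f : rsum (l1 ++ l2) f = rsum l1 f + rsum l2 f.
Proof. unfold rsum. induction l1 as [|a l1 IH]; simpl; [lra | rewrite IH; ring]. Qed.

Lemma rsum_nonneg {A} (l : list A) f : (forall v, 0 <= f v) -> 0 <= rsum l f.
Proof.
  intros H. unfold rsum. induction l as [|a l IH]; simpl; [lra|]. specialize (H a). lra.
Qed.

Lemma rsum_le_support {A} (l S : list A) f : NoDup l -> (forall v, 0 <= f v) ->
  (forall v, In v l -> f v <> 0 -> In v S) -> rsum l f <= rsum S f.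
Proof.
  revert S. induction l as [|a l IH]; intros S Hl Hf Hsup; [apply rsum_nonneg, Hf|].
  apply NoDup_cons_iff in Hl. destruct Hl as [Ha Hl].
  change (rsum (a :: l) f) with (f a + rsum l f).
  destruct (Req_dec (f a) 0) as [E|E].
  - rewrite E, Rplus_0_l. apply IH; auto. intros v Hv; apply Hsup; right; exact Hv.
  - destruct (in_split a S (Hsup a (or_introl eq_refl) E)) as [S1 [S2 ->]].
    assert (rsum l f <= rsum (S1 ++ S2) f).
    { apply IH; auto. intros v Hv Hfv. destruct (in_app_or _ _ _ (Hsup v (or_intror Hv) Hfv))
        as [h|[h|h]]; apply in_or_app; auto. subst; contradiction. }
    rewrite rsum_app in *. change (rsum (a :: S2) f) with (f a + rsum S2 f). lra.
Qed.

Lemma fold_Rmax_le {A} (l : list A) (F : A -> R) t : 0 <= t ->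
  (forall u, In u l -> F u <= t) -> fold_right Rmax 0 (map F l) <= t.
Proof.
  intros Ht H. induction l as [|a l IH]; simpl; [exact Ht|].
  apply Rmax_lub; [apply H; left; reflexivity | apply IH; intros; apply H; right; auto].
Qed.

Lemma fold_max_ge {A} (l : list A) (F : A -> nat) a : In a l ->
  (F a <= fold_right Nat.max 0 (map F l))%nat.
Proof.
  induction l as [|x l IH]; simpl; [tauto|]. intros [->|H]; [lia|]. specialize (IH H). lia.
Qed.

Lemma length_ge_2 {A} (l : list A) a c : In a l -> In c l -> a <> c -> (2 <= length l)%nat.
Proof.
  destruct l as [|x1 [|x2 l]]; simpl; [tauto | | intros; lia].
  intros [<-|[]] [<-|[]]; tauto.
Qed.

(** * The constant [t] *)

Definition t_poly (t : R) : R :=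
  (t ^ 3 - 2) + 2 * (t ^ 2 - 1) - (t ^ 2 - 1) ^ 2 * (t ^ 3 - 2).

Lemma t_poly_root : exists t, 145/100 <= t < 161/100 /\ t_poly t = 0.
Proof.
  assert (Hc : continuity (fun t => - t_poly t)) by (unfold t_poly; reg).
  destruct (IVT _ (145/100) (161/100) Hc) as [t [[h1 h2] h3]];
    [lra | unfold t_poly; simpl; lra | unfold t_poly; simpl; lra |].
  exists t. split; [split; [exact h1|] | lra].
  destruct h2 as [h2|h2]; [exact h2|]. subst. unfold t_poly in h3. simpl in h3. lra.
Qed.

(* [t_poly] is the numerator of [t_eq] over the common denominator. *)
Lemma t_eq_of_root t : 145/100 <= t -> t_poly t = 0 -> t_eq t.
Proof.
  intros h1 h2. unfold t_eq.
  assert (0 < t ^ 2 - 1) by (simpl; nra). assert (0 < t ^ 3 - 2) by (simpl; nra).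
  assert (E : / (t ^ 2 - 1) + 2 / (t ^ 3 - 2) + 1 - t ^ 2
              = t_poly t / ((t ^ 2 - 1) * (t ^ 3 - 2))) by (unfold t_poly; field; lra).
  rewrite h2 in E. unfold Rdiv in E. rewrite Rmult_0_l in E. lra.
Qed.

Lemma t_eq_lhs_decreasing x y : 1 < x -> 2 < x ^ 3 -> x < y ->
  / (y ^ 2 - 1) + 2 / (y ^ 3 - 2) + 1 - y ^ 2 < / (x ^ 2 - 1) + 2 / (x ^ 3 - 2) + 1 - x ^ 2.
Proof.
  intros h1 h2 h3.
  assert (x ^ 2 < y ^ 2) by (simpl; nra). assert (x ^ 3 < y ^ 3) by (simpl; nra).
  assert (0 < x ^ 2 - 1) by (simpl; nra).
  assert (/ (y ^ 2 - 1) < / (x ^ 2 - 1)) by (apply Rinv_lt_contravar; nra).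
  assert (/ (y ^ 3 - 2) < / (x ^ 3 - 2)) by (apply Rinv_lt_contravar; nra).
  unfold Rdiv. lra.
Qed.

Lemma t_eq_unique t t' : 1 < t -> 2 < t ^ 3 -> t_eq t -> 1 < t' -> 2 < t' ^ 3 -> t_eq t' ->
  t' = t.
Proof.
  unfold t_eq. intros a1 a2 a3 b1 b2 b3.
  destruct (Rtotal_order t' t) as [H|[H|H]]; [| exact H |].
  - pose proof (t_eq_lhs_decreasing t' t b1 b2 H). lra.
  - pose proof (t_eq_lhs_decreasing t t' a1 a2 H). lra.
Qed.

(** * The weight and the testing function *)

Section Construction.
Variables (b : nat) (gam : R) (psi : R -> R) (q : nat) (K0 K1 K2 : R -> Prop) (eps del t : R).

Local Notation E x u v := (inE b gam psi q x eps del u v).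
Local Notation em := excluded_middle_informative.

Definition partners1 (x : R) (a c : list nat) : Prop :=
  forall u v, u <> v -> E x u v -> (u = a /\ v = c) \/ (u = c /\ v = a).

Definition partners2 (x : R) (a c d : list nat) : Prop :=
  forall u v, u <> v -> E x u v ->
    (u = a /\ v = c) \/ (u = a /\ v = d) \/ (u = c /\ v = a) \/ (u = d /\ v = a).

Hypothesis hb : (1 <= b)%nat.
Hypothesis hB0 : borel K0.
Hypothesis hB1 : borel K1.
Hypothesis hB2 : borel K2.
Hypothesis hE : forall u v, is_word b q u -> is_word b q v -> borel01 (fun x => E x u v).
Hypothesis hd01 : forall x, ~ (K0 x /\ K1 x).
Hypothesis hd02 : forall x, ~ (K0 x /\ K2 x).
Hypothesis hd12 : forall x, ~ (K1 x /\ K2 x).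
Hypothesis hcov : forall x, in01 x <-> (K0 x \/ K1 x \/ K2 x).
Hypothesis heps : 0 < eps.
Hypothesis hdel : 0 < del.
Hypothesis hK0 : forall x, K0 x -> e_num b gam psi q x eps del = 1%nat.
Hypothesis hK1 : forall x, K1 x -> exists a c,
  is_word b q a /\ is_word b q c /\ K0 (xw b x a) /\ K0 (xw b x c) /\ partners1 x a c.
Hypothesis hK2 : forall x, K2 x -> exists a c d,
  is_word b q a /\ is_word b q c /\ is_word b q d /\
  K0 (xw b x a) /\ K0 (xw b x c) /\ K1 (xw b x d) /\ partners2 x a c d.
Hypothesis ht_pos : 0 < t.
Hypothesis ht_sq : 2 <= t ^ 2.
Hypothesis ht_le : t <= 2.
Hypothesis ht_eq : t_eq t.

Lemma t_gt_1 : 1 < t.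
Proof. simpl in ht_sq. nra. Qed.

Lemma t_cube_gt_2 : 2 < t ^ 3.
Proof. pose proof t_gt_1. simpl in *. nra. Qed.

Definition mu : R := / (t ^ 2 - 1).
Definition nu : R := 2 / (t ^ 3 - 2).

Lemma mu_pos : 0 < mu.
Proof. unfold mu. apply Rinv_0_lt_compat. lra. Qed.

Lemma mu_le_1 : mu <= 1.
Proof. unfold mu. rewrite <- Rinv_1. apply Rinv_le_contravar; lra. Qed.

Lemma inv_mu : / mu = t ^ 2 - 1.
Proof. unfold mu. apply Rinv_inv. Qed.

Lemma nu_pos : 0 < nu.
Proof. pose proof t_cube_gt_2. unfold nu. apply Rdiv_lt_0_compat; lra. Qed.

Lemma inv_nu : / nu = (t ^ 3 - 2) / 2.
Proof. pose proof t_cube_gt_2. unfold nu. field. lra. Qed.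

Lemma mu_nu_sum : 1 + mu + nu = t ^ 2.
Proof. unfold t_eq in ht_eq. unfold mu, nu. lra. Qed.

Lemma inE_sym x u v : E x u v -> E x v u.
Proof.
  intros [Wu [Wv [f [g [hf [hg [H1 H2]]]]]]].
  split; [exact Wv|]. split; [exact Wu|]. exists g, f.
  split; [exact hg|]. split; [exact hf|]. split; rewrite Rabs_minus_sym; assumption.
Qed.

Lemma inE_refl x u : is_word b q u -> E x u u.
Proof.
  intros Wu. split; [exact Wu|]. split; [exact Wu|].
  exists (fun _ => 0%nat), (fun _ => 0%nat).
  split; [intros n; simpl; lia|]. split; [intros n; simpl; lia|].
  split; unfold Rminus; rewrite Rplus_opp_r, Rabs_R0; lra.
Qed.

(* A second partner of [u] would make the row of [u] count at least two words. *)
Lemma K0_inE_eq x u v : K0 x -> E x u v -> u = v.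
Proof.
  intros Hx HE. destruct (list_eq_dec Nat.eq_dec u v) as [|Hne]; [assumption|]. exfalso.
  pose proof HE as [Wu [Wv _]].
  set (row := fun k => length (filter (inEb b gam psi q x eps del k) (words b q))).
  assert (Hu : In u (words b q)) by (apply In_words, Wu).
  pose proof (fold_max_ge (words b q) row u Hu) as Hle.
  change (fold_right Nat.max 0%nat (map row (words b q))) with (e_num b gam psi q x eps del) in Hle.
  rewrite (hK0 x Hx) in Hle.
  assert (inEb_true : forall v, E x u v -> inEb b gam psi q x eps del u v = true).
  { intros w Hw. unfold inEb. destruct (em _); [reflexivity | contradiction]. }
  assert (2 <= row u)%nat; [|lia].
  apply length_ge_2 with u v; [| |exact Hne]; apply filter_In; split;
    auto using inEb_true, inE_refl; apply In_words; assumption.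
Qed.

Definition omega (x : R) : R := if em (K0 x) then 1 else if em (K1 x) then t / 2 else / t.

Lemma omega_K0 y : K0 y -> omega y = 1.
Proof. intros H. unfold omega. destruct (em (K0 y)); tauto. Qed.

Lemma omega_K1 y : K1 y -> omega y = t / 2.
Proof.
  intros H. unfold omega. destruct (em (K0 y)); [exfalso; apply (hd01 y); auto|].
  destruct (em (K1 y)); tauto.
Qed.

Lemma omega_K2 y : K2 y -> omega y = / t.
Proof.
  intros H. unfold omega. destruct (em (K0 y)); [exfalso; apply (hd02 y); auto|].
  destruct (em (K1 y)); [exfalso; apply (hd12 y); auto | reflexivity].
Qed.

Lemma omega_bounds y : / t <= omega y <= 1.
Proof.
  pose proof t_gt_1.
  assert (/ t <= 1) by (rewrite <- Rinv_1; apply Rinv_le_contravar; lra).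
  assert (/ t <= t / 2).
  { apply Rmult_le_reg_r with t; [lra|]. rewrite Rinv_l by lra. simpl in ht_sq. lra. }
  unfold omega. destruct (em (K0 y)); [lra|]. destruct (em (K1 y)); lra.
Qed.

Lemma omega_pos y : 0 < omega y.
Proof. pose proof (omega_bounds y). pose proof (Rinv_0_lt_compat t ht_pos). lra. Qed.

Lemma omega_ratio_le x y : omega x / omega y <= omega x * t.
Proof.
  pose proof (omega_bounds y). pose proof (omega_pos x). pose proof (omega_pos y).
  unfold Rdiv. apply Rmult_le_compat_l; [lra|].
  rewrite <- (Rinv_inv t). apply Rinv_le_contravar; [apply Rinv_0_lt_compat|]; lra.
Qed.

Definition hasK1 (x : R) (u : list nat) : Prop :=
  exists w, In w (words b q) /\ w <> u /\ E x u w /\ K1 (xw b x w).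

(* On [K2] the words [a], [c] (in [K0]) and [d] (in [K1]) are weighted so that the rows
   of [a] and [d] sum to [t^2 = 1 + mu + nu = 1 + /mu] and [t^3/2 = 1 + /nu]. *)
Definition Vpair (x : R) (u v : list nat) : R :=
  if em (K2 x) then
    if em (K0 (xw b x u) /\ K0 (xw b x v)) then (if em (hasK1 x u) then mu else / mu)
    else if em (K0 (xw b x u) /\ K1 (xw b x v)) then nu else / nu
  else 1.

Definition Vtest (x : R) (u v : list nat) : R :=
  if list_eq_dec Nat.eq_dec u v then 1 else if em (E x u v) then Vpair x u v else 0.

Lemma Vpair_not_K2 x u v : ~ K2 x -> Vpair x u v = 1.
Proof. intros H. unfold Vpair. destruct (em (K2 x)); tauto. Qed.

Lemma Vpair_K0_K0 x u v : K2 x -> K0 (xw b x u) -> K0 (xw b x v) ->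
  Vpair x u v = if em (hasK1 x u) then mu else / mu.
Proof.
  intros Hx Hu Hv. unfold Vpair. destruct (em (K2 x)); [|tauto].
  destruct (em (K0 (xw b x u) /\ K0 (xw b x v))); tauto.
Qed.

Lemma Vpair_K0_K0_bounds x u v : K2 x -> K0 (xw b x u) -> K0 (xw b x v) ->
  mu <= Vpair x u v <= / mu.
Proof.
  intros Hx Hu Hv. rewrite Vpair_K0_K0 by assumption.
  pose proof mu_le_1. pose proof mu_pos.
  assert (1 <= / mu) by (rewrite <- Rinv_1; apply Rinv_le_contravar; lra).
  destruct (em _); lra.
Qed.

Lemma Vpair_K0_K1 x u v : K2 x -> K0 (xw b x u) -> K1 (xw b x v) -> Vpair x u v = nu.
Proof.
  intros Hx Hu Hv. unfold Vpair. destruct (em (K2 x)); [|tauto].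
  destruct (em (K0 (xw b x u) /\ K0 (xw b x v))); [exfalso; apply (hd01 (xw b x v)); tauto|].
  destruct (em _); tauto.
Qed.

Lemma Vpair_K1_K0 x u v : K2 x -> K1 (xw b x u) -> K0 (xw b x v) -> Vpair x u v = / nu.
Proof.
  intros Hx Hu Hv. unfold Vpair. destruct (em (K2 x)); [|tauto].
  destruct (em (K0 (xw b x u) /\ K0 (xw b x v))); [exfalso; apply (hd01 (xw b x u)); tauto|].
  destruct (em _); [exfalso; apply (hd01 (xw b x u)); tauto | reflexivity].
Qed.

Lemma Vpair_pos x u v : 0 < Vpair x u v.
Proof.
  pose proof mu_pos. pose proof nu_pos. unfold Vpair.
  destruct (em (K2 x)); [|lra].
  repeat destruct (em _); try lra; apply Rinv_0_lt_compat; lra.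
Qed.

Lemma Vtest_diag x u : Vtest x u u = 1.
Proof. unfold Vtest. destruct (list_eq_dec _ _ _); tauto. Qed.

Lemma Vtest_nonneg x u v : 0 <= Vtest x u v.
Proof.
  unfold Vtest. destruct (list_eq_dec _ _ _); [lra|].
  destruct (em _); [left; apply Vpair_pos | lra].
Qed.

Lemma Vtest_not_inE x u v : u <> v -> ~ E x u v -> Vtest x u v = 0.
Proof.
  intros H1 H2. unfold Vtest. destruct (list_eq_dec _ _ _); [tauto|]. destruct (em _); tauto.
Qed.

Lemma Vtest_inE x u v : u <> v -> E x u v -> Vtest x u v = Vpair x u v.
Proof.
  intros H1 H2. unfold Vtest. destruct (list_eq_dec _ _ _); [tauto|]. destruct (em _); tauto.
Qed.

Lemma Vtest_le x u v c : u <> v -> Vpair x u v <= c -> 0 <= c -> Vtest x u v <= c.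
Proof.
  intros H1 H2 H3. unfold Vtest. destruct (list_eq_dec _ _ _); [tauto|]. destruct (em _); lra.
Qed.

Definition Vrow (x : R) (u : list nat) : R := rsum (words b q) (Vtest x u).

Definition row_term (x : R) (u : list nat) : R := omega x / omega (xw b x u) * Vrow x u.

Lemma Vrow_le x u S : (forall v, v <> u -> E x u v -> In v S) ->
  Vrow x u <= 1 + rsum S (Vtest x u).
Proof.
  intros HS. rewrite <- (Vtest_diag x u).
  apply (rsum_le_support (words b q) (u :: S)); [apply NoDup_words | apply Vtest_nonneg|].
  intros v _ Hv. destruct (list_eq_dec Nat.eq_dec v u) as [->|Hvu]; [left; reflexivity|].
  right. apply HS; [exact Hvu|]. apply NNPP. intros HnE. apply Hv, Vtest_not_inE; auto.
Qed.

Lemma row_term_le x u r s :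
  omega x / omega (xw b x u) <= r -> Vrow x u <= s -> r * s <= t -> row_term x u <= t.
Proof.
  intros Hr Hs Hrs. unfold row_term.
  assert (0 <= Vrow x u) by (apply rsum_nonneg, Vtest_nonneg).
  assert (0 <= omega x / omega (xw b x u)).
  { left. apply Rdiv_lt_0_compat; apply omega_pos. }
  apply Rle_trans with (r * s); [apply Rmult_le_compat|]; lra.
Qed.

Lemma row_term_isolated x u : (forall v, v <> u -> ~ E x u v) -> row_term x u <= t.
Proof.
  intros Hu. apply row_term_le with (omega x * t) 1; [apply omega_ratio_le| |].
  - eapply Rle_trans; [apply (Vrow_le x u nil)|]; [intros v Hv HE; exfalso; exact (Hu v Hv HE)|].
    unfold rsum; simpl; lra.
  - pose proof (omega_bounds x). pose proof t_gt_1. nra.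
Qed.

Lemma row_term_K1 x u a c : K1 x -> K0 (xw b x a) -> K0 (xw b x c) -> partners1 x a c ->
  row_term x u <= t.
Proof.
  intros Hx Ha Hc Hp.
  assert (Vle1 : forall v w, Vtest x v w <= 1).
  { intros v w. unfold Vtest. destruct (list_eq_dec _ _ _); [lra|].
    destruct (em _); [rewrite Vpair_not_K2; [lra|] | lra].
    intros H2. apply (hd12 x); auto. }
  assert (Hend : forall e o, K0 (xw b x e) -> (forall v, v <> e -> E x e v -> v = o) ->
                             row_term x e <= t).
  { intros e o He Ho. apply row_term_le with (t / 2) 2.
    - rewrite (omega_K0 _ He), (omega_K1 x Hx). lra.
    - eapply Rle_trans; [apply (Vrow_le x e (o :: nil))|].
      + intros v Hv HE. left. symmetry. apply Ho; assumption.
      + unfold rsum; simpl. specialize (Vle1 e o). lra.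
    - lra. }
  destruct (list_eq_dec Nat.eq_dec u a) as [->|Hua];
    [|destruct (list_eq_dec Nat.eq_dec u c) as [->|Huc]].
  - apply Hend with c; [exact Ha|]. intros v Hv HE.
    destruct (Hp a v) as [[_ ->]|[-> ->]]; auto.
  - apply Hend with a; [exact Hc|]. intros v Hv HE.
    destruct (Hp c v) as [[-> ->]|[_ ->]]; auto.
  - apply row_term_isolated. intros v Hv HE.
    destruct (Hp u v) as [[-> _]|[-> _]]; auto.
Qed.

Section AtK2Point.
Variables (x : R) (a c d : list nat).
Hypothesis Hx : K2 x.
Hypothesis Wd : is_word b q d.
Hypothesis Ha : K0 (xw b x a).
Hypothesis Hc : K0 (xw b x c).
Hypothesis Hd : K1 (xw b x d).
Hypothesis Hp : partners2 x a c d.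

Lemma d_neq_a : d <> a.
Proof. intros Hda. apply (hd01 (xw b x a)). rewrite <- Hda at 2. split; assumption. Qed.

Lemma d_neq_c : d <> c.
Proof. intros Hdc. apply (hd01 (xw b x c)). rewrite <- Hdc at 2. split; assumption. Qed.

Lemma not_hasK1_c : c <> a -> ~ hasK1 x c.
Proof.
  intros Hca [w [_ [Hw [HE Kw]]]]. pose proof d_neq_c.
  destruct (Hp c w (not_eq_sym Hw) HE) as [[-> _]|[[-> _]|[[_ ->]|[-> _]]]];
    [congruence | congruence | apply (hd01 (xw b x a)); auto | congruence].
Qed.

Lemma Vpair_c_a : c <> a -> Vpair x c a = / mu.
Proof.
  intros Hca. rewrite Vpair_K0_K0 by assumption.
  destruct (em (hasK1 x c)) as [h|]; [exfalso; exact (not_hasK1_c Hca h) | reflexivity].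
Qed.

Lemma Vrow_a : Vrow x a <= t ^ 2.
Proof.
  pose proof mu_pos. pose proof nu_pos. pose proof d_neq_a. rewrite <- mu_nu_sum.
  assert (Vd : Vtest x a d <= nu).
  { apply Vtest_le; [congruence | rewrite Vpair_K0_K1; auto; lra | lra]. }
  destruct (list_eq_dec Nat.eq_dec c a) as [->|Hca].
  - eapply Rle_trans; [apply (Vrow_le x a (d :: nil))|].
    + intros v Hv HE. destruct (Hp a v) as [[_ ->]|[[_ ->]|[[_ ->]|[-> ->]]]];
        simpl; auto; congruence.
    + unfold rsum; simpl. lra.
  - eapply Rle_trans; [apply (Vrow_le x a (c :: d :: nil))|].
    + intros v Hv HE. destruct (Hp a v) as [[_ ->]|[[_ ->]|[[_ ->]|[-> ->]]]];
        simpl; auto; congruence.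
    + unfold rsum; simpl.
      destruct (classic (E x a d)) as [Ead|Nad].
      * assert (Vc : Vtest x a c <= mu).
        { apply Vtest_le; [congruence| |lra]. rewrite Vpair_K0_K0 by assumption.
          destruct (em (hasK1 x a)) as [|Hn]; [lra|]. exfalso. apply Hn.
          exists d. split; [apply In_words, Wd|]. auto. }
        lra.
      * rewrite (Vtest_not_inE x a d) by congruence.
        assert (Vc : Vtest x a c <= / mu).
        { apply Vtest_le; [congruence | apply Vpair_K0_K0_bounds; auto | ].
          left; apply Rinv_0_lt_compat; lra. }
        rewrite inv_mu in Vc. pose proof mu_nu_sum. lra.
Qed.

Lemma Vrow_c : c <> a -> Vrow x c <= t ^ 2.
Proof.
  intros Hca. pose proof mu_pos. pose proof d_neq_c.
  eapply Rle_trans; [apply (Vrow_le x c (a :: nil))|].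
  - intros v Hv HE. destruct (Hp c v) as [[-> _]|[[-> _]|[[_ ->]|[-> _]]]];
      simpl; auto; congruence.
  - unfold rsum; simpl.
    assert (Vca : Vtest x c a <= / mu).
    { apply Vtest_le; [exact Hca | rewrite Vpair_c_a; auto; lra |].
      left; apply Rinv_0_lt_compat; lra. }
    rewrite inv_mu in Vca. lra.
Qed.

Lemma Vrow_d : Vrow x d <= t ^ 3 / 2.
Proof.
  pose proof nu_pos. pose proof d_neq_a. pose proof d_neq_c.
  eapply Rle_trans; [apply (Vrow_le x d (a :: nil))|].
  - intros v Hv HE. destruct (Hp d v) as [[-> _]|[[-> _]|[[-> _]|[_ ->]]]];
      simpl; auto; congruence.
  - unfold rsum; simpl.
    assert (Vda : Vtest x d a <= / nu).
    { apply Vtest_le; [exact d_neq_a | rewrite Vpair_K1_K0; auto; lra |].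
      left; apply Rinv_0_lt_compat; lra. }
    rewrite inv_nu in Vda. lra.
Qed.

Lemma row_term_K2 u : row_term x u <= t.
Proof.
  pose proof t_gt_1.
  assert (Hinv : 0 < / t) by (apply Rinv_0_lt_compat; lra).
  assert (Hsq : / t * t ^ 2 = t) by (simpl; field; lra).
  destruct (list_eq_dec Nat.eq_dec u a) as [->|Hua];
    [|destruct (list_eq_dec Nat.eq_dec u c) as [->|Huc];
      [|destruct (list_eq_dec Nat.eq_dec u d) as [->|Hud]]].
  - apply row_term_le with (/ t) (t ^ 2); [|apply Vrow_a | lra].
    rewrite (omega_K0 _ Ha), (omega_K2 x Hx). lra.
  - apply row_term_le with (/ t) (t ^ 2); [|apply Vrow_c; exact Hua | lra].
    rewrite (omega_K0 _ Hc), (omega_K2 x Hx). lra.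
  - apply row_term_le with (/ t / (t / 2)) (t ^ 3 / 2); [|apply Vrow_d |].
    + rewrite (omega_K1 _ Hd), (omega_K2 x Hx). lra.
    + right. simpl. field. lra.
  - apply row_term_isolated. intros v Hv HE.
    destruct (Hp u v) as [[-> _]|[[-> _]|[[-> _]|[-> _]]]]; auto.
Qed.

Lemma Vtest_product_K2 u v : u <> v -> E x u v -> 1 <= Vtest x u v * Vtest x v u.
Proof.
  intros Huv HE. pose proof mu_pos. pose proof nu_pos.
  rewrite (Vtest_inE x u v), (Vtest_inE x v u) by auto using inE_sym.
  assert (mi : mu * / mu = 1) by (field; lra).
  assert (ni : nu * / nu = 1) by (field; lra).
  destruct (Hp u v Huv HE) as [[-> ->]|[[-> ->]|[[-> ->]|[-> ->]]]].
  - rewrite Vpair_c_a by auto. pose proof (Vpair_K0_K0_bounds x a c Hx Ha Hc). nra.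
  - rewrite Vpair_K0_K1, Vpair_K1_K0 by auto. lra.
  - rewrite Vpair_c_a by auto. pose proof (Vpair_K0_K0_bounds x a c Hx Ha Hc). nra.
  - rewrite Vpair_K1_K0, Vpair_K0_K1 by auto. lra.
Qed.

End AtK2Point.

Lemma Sigma_le_t x : in01 x -> Sigma b q Vtest omega x <= t.
Proof.
  intros Hx. apply fold_Rmax_le; [lra|]. intros u _. change (row_term x u <= t).
  apply hcov in Hx. destruct Hx as [H|[H|H]].
  - apply row_term_isolated. intros v Hv HE. apply Hv. symmetry. exact (K0_inE_eq x u v H HE).
  - destruct (hK1 x H) as [a [c [_ [_ [Ka [Kc Hp]]]]]]. exact (row_term_K1 x u a c H Ka Kc Hp).
  - destruct (hK2 x H) as [a [c [d [_ [_ [Wd [Ka [Kc [Kd Hp]]]]]]]]].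
    exact (row_term_K2 x a c d H Wd Ka Kc Kd Hp u).
Qed.

Lemma Vtest_product_ge_1 x u v : in01 x -> E x u v -> 1 <= Vtest x u v * Vtest x v u.
Proof.
  intros Hx HE. destruct (list_eq_dec Nat.eq_dec u v) as [->|Huv].
  { rewrite Vtest_diag. lra. }
  apply hcov in Hx. destruct Hx as [H|[H|H]].
  - exfalso. exact (Huv (K0_inE_eq x u v H HE)).
  - assert (~ K2 x) by (intros H2; apply (hd12 x); auto).
    rewrite (Vtest_inE x u v), (Vtest_inE x v u), !Vpair_not_K2 by auto using inE_sym. lra.
  - destruct (hK2 x H) as [a [c [d [_ [_ [Wd [Ka [Kc [Kd Hp]]]]]]]]].
    exact (Vtest_product_K2 x a c d H Ka Kc Kd Hp u v Huv HE).
Qed.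

Lemma borel01_xw (K : R -> Prop) u : borel K -> borel01 (fun x => K (xw b x u)).
Proof. intros HK. apply borel01_of_borel, borel_preimage; [apply continuity_affine | exact HK]. Qed.

Lemma borel01_hasK1 u : is_word b q u -> borel01 (fun x => hasK1 x u).
Proof.
  intros Wu. unfold hasK1.
  apply (borel01_exists_list _ (fun w x => w <> u /\ E x u w /\ K1 (xw b x w))).
  intros w Hw. apply In_words in Hw.
  apply borel01_and; [apply borel01_const|].
  apply borel01_and; [apply hE; assumption | apply borel01_xw, hB1].
Qed.

Lemma measurable01_Vtest u v : is_word b q u -> is_word b q v ->
  measurable01 (fun x => Vtest x u v).
Proof.
  intros Wu Wv. unfold Vtest. destruct (list_eq_dec Nat.eq_dec u v); [apply measurable01_const|].
  apply measurable01_if; [apply hE; assumption | | apply measurable01_const].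
  unfold Vpair. apply measurable01_if; [apply borel01_of_borel, hB2 | | apply measurable01_const].
  apply measurable01_if; [apply borel01_and; apply borel01_xw; assumption | |].
  - apply measurable01_if; [apply borel01_hasK1, Wu | |]; apply measurable01_const.
  - apply measurable01_if; [apply borel01_and; apply borel01_xw; assumption | |];
      apply measurable01_const.
Qed.

Lemma omega_weight : weight omega.
Proof.
  split; [|split].
  - unfold omega.
    apply measurable01_if; [apply borel01_of_borel, hB0 | apply measurable01_const|].
    apply measurable01_if; [apply borel01_of_borel, hB1 | |]; apply measurable01_const.
  - intros x _. apply omega_pos.
  - exists t. intros x _. pose proof (omega_bounds x). pose proof (omega_pos x).
    pose proof t_gt_1. split; [lra|].
    rewrite <- (Rinv_inv t). apply Rinv_le_contravar; [apply Rinv_0_lt_compat|]; lra.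
Qed.

Lemma Vtest_admissible : admissible b gam psi q Vtest.
Proof.
  split; [|split].
  - intros u v Wu Wv. apply measurable01_Vtest; assumption.
  - intros x u v _ _ _. apply Vtest_nonneg.
  - exists eps, del. split; [exact heps|]. split; [exact hdel|].
    intros x u v Hx HE. apply Vtest_product_ge_1; assumption.
Qed.

Theorem sigma_le_of_partition : sigma_le b gam psi q t.
Proof.
  intros s Hs. exists omega, Vtest. split; [apply omega_weight|].
  split; [apply Vtest_admissible|].
  intros eta Heta. exists (fun _ => 0), (fun _ => 0). split; [|split].
  - intros x [Hx Hsx]. pose proof (Sigma_le_t x Hx). lra.
  - intros; lra.
  - intros m. apply Rle_trans with 0; [|lra].
    induction m as [|m IH]; simpl; lra.
Qed.

End Construction.

Theorem lemma2p12
  (b : nat) (hb : (2 <= b)%nat)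
  (gam : R) (hgam : / INR b < gam < 1)
  (psi : R -> R) (hper : forall x, psi (x + 1) = psi x)
  (hC1 : exists psi' : R -> R,
      (forall x, derivable_pt_lim psi x (psi' x)) /\ continuity psi')
  (q : nat) (hq : (1 <= q)%nat)
  (K0 K1 K2 : R -> Prop)
  (hB0 : borel K0) (hB1 : borel K1) (hB2 : borel K2)
  (hd01 : forall x, ~ (K0 x /\ K1 x))
  (hd02 : forall x, ~ (K0 x /\ K2 x))
  (hd12 : forall x, ~ (K1 x /\ K2 x))
  (hcov : forall x, in01 x <-> (K0 x \/ K1 x \/ K2 x))
  (eps del : R) (heps : 0 < eps) (hdel : 0 < del)
  (hK0 : forall x, K0 x -> e_num b gam psi q x eps del = 1%nat)
  (hK1 : forall x, K1 x -> exists a c,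
      is_word b q a /\ is_word b q c /\ K0 (xw b x a) /\ K0 (xw b x c) /\
      forall u v, u <> v -> inE b gam psi q x eps del u v ->
        (u = a /\ v = c) \/ (u = c /\ v = a))
  (hK2 : forall x, K2 x -> exists a c d,
      is_word b q a /\ is_word b q c /\ is_word b q d /\
      K0 (xw b x a) /\ K0 (xw b x c) /\ K1 (xw b x d) /\
      forall u v, u <> v -> inE b gam psi q x eps del u v ->
        (u = a /\ v = c) \/ (u = a /\ v = d) \/
        (u = c /\ v = a) \/ (u = d /\ v = a)) :
  exists t, 1 < t /\ 2 < t ^ 3 /\ t_eq t /\
    (forall t', 1 < t' -> 2 < t' ^ 3 -> t_eq t' -> t' = t) /\
    t < 161 / 100 /\ sigma_le b gam psi q t.
Proof.
  destruct hC1 as [psi' [psi_deriv psi'_cont]].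
  assert (hb1 : (1 <= b)%nat) by lia.
  assert (hgam01 : 0 <= gam < 1).
  { pose proof (Rinv_0_lt_compat (INR b) (lt_0_INR b ltac:(lia))). lra. }
  assert (psi_cont : continuity psi).
  { intros x. apply derivable_continuous_pt. exists (psi' x). apply psi_deriv. }
  destruct (periodic_continuous_bounded psi hper psi_cont) as [M0 hM0].
  destruct (periodic_continuous_bounded psi' (derivative_periodic psi psi' hper psi_deriv)
    psi'_cont) as [M1 hM1].
  destruct t_poly_root as [t [[ht1 ht2] hroot]].
  assert (ht : t_eq t) by (apply t_eq_of_root; assumption).
  assert (ht3 : 2 < t ^ 3) by (simpl; nra).
  exists t. split; [lra|]. split; [exact ht3|]. split; [exact ht|].
  split; [intros t' h1 h2 h3; apply (t_eq_unique t t'); auto; lra|].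
  split; [exact ht2|].
  apply (sigma_le_of_partition b gam psi q K0 K1 K2 eps del t); auto; try (simpl; nra); try lra.
  intros u v [Wu _] [Wv _].
  exact (borel01_inE b gam psi psi' M0 M1 hb1 hgam01 psi_deriv psi'_cont hM0 hM1
    q eps del u v hq Wu Wv).
Qed.
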